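(* There exist a finite-horizon two-player Markov game $\mathcal{G}=(S,A_1,A_2,P,R_1,H,G)$, an abstraction $\phi$, and two peer policies $\pi_2^{e}$ and $\pi_2^{e+1}$ (a peer policy update $\pi_2^e\to\pi_2^{e+1}$) such that some $u\in\mathrm{Core}_\phi(\mathcal{S}_e)$ satisfies $u\notin\mathrm{Core}_\phi(\mathcal{S}_{e+1})$. Moreover, such examples can be chosen so that, after removing the trivial terminal (goal) symbol from all abstract trajectories, $\mathrm{Core}_\phi(\mathcal{S}_e)\cap\mathrm{Core}_\phi(\mathcal{S}_{e+1})=\varnothing$.
   Context: A two-player finite-horizon Markov game $\mathcal{G}=(S,A_1,A_2,P,R_1,H,G)$ has state set $S$, action sets $A_1$ (focal agent) and $A_2$ (peer), joint transition kernel $P(s'\mid s,a_1,a_2)$, focal reward $R_1(s,a_1,a_2)$, horizon $H<\infty$, and goal set $G\subseteq S$ (episodes terminate on first visit to $G$). In episode $e$ the peer follows a Markov policy $\pi_2^e(\cdot\mid s)$, inducing the single-agent MDP $M_e=(S,A_1,P_e,R_e,H,G)$ with $P_e(s'\mid s,a_1)=\sum_{a_2\in A_2}P(s'\mid s,a_1,a_2)\pi_2^e(a_2\mid s)$ and $R_e(s,a_1)=\sum_{a_2}R_1(s,a_1,a_2)\pi_2^e(a_2\mid s)$. A trajectory is $\tau=(s_1,a_1,\dots,s_T,a_T)$ with $T\le H$, a word over $S\times A_1$; $\mathcal{S}_e$ is the set of successful trajectories of $M_e$, i.e. trajectories realizable in $M_e$ (each transition $s_t\to s_{t+1}$ has positive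 probability under $P_e(\cdot\mid s_t,a_t)$, from the game's initial state) that reach $G$ at some $t\le H$. For sequences $u,v$, $u\preccurlyeq v$ means $u$ is a (not necessarily contiguous) subsequence of $v$. An abstraction is a map $\phi:S\times A_1\to\Sigma$ applied letterwise. The episode-wise invariant core is $\mathrm{Core}_\phi(\mathcal{S}_e)=\max_{\preccurlyeq}\{u\in\Sigma^{\le H}:\ \forall\tau\in\mathcal{S}_e,\ u\preccurlyeq\phi(\tau)\}$, the set of $\preccurlyeq$-maximal common subsequences (of length at most $H$) of all $\phi(\tau)$, $\tau\in\mathcal{S}_e$. *)

From HB Require Import structures.
From mathcomp Require Import all_boot all_order all_algebra.
Set Implicit Arguments. Unset Strict Implicit. Unset Printing Implicit Defensive.
Import Order.TTheory GRing.Theory Num.Theory.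
Local Open Scope ring_scope.

Section Game.
Variables (R : realFieldType) (S A1 A2 : finType).

Definition is_kernel (P : S -> A1 -> A2 -> S -> R) : Prop :=
  (forall s a1 a2 s', 0 <= P s a1 a2 s') /\
  (forall s a1 a2, \sum_(s' : S) P s a1 a2 s' = 1).

Definition is_policy (pi2 : S -> A2 -> R) : Prop :=
  (forall s a2, 0 <= pi2 s a2) /\ (forall s, \sum_(a2 : A2) pi2 s a2 = 1).

Definition induced_P (P : S -> A1 -> A2 -> S -> R) (pi2 : S -> A2 -> R)
  (s : S) (a1 : A1) (s' : S) : R :=
  \sum_(a2 : A2) P s a1 a2 s' * pi2 s a2.

Definition induced_R (R1 : S -> A1 -> A2 -> R) (pi2 : S -> A2 -> R)
  (s : S) (a1 : A1) : R :=
  \sum_(a2 : A2) R1 s a1 a2 * pi2 s a2.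

(* tau = [:: (s_1,a_1); ...; (s_T,a_T)] is a successful trajectory of M_e:
   1 <= T <= H, s_1 = s0, every transition has positive probability under P_e,
   s_T \in G and s_t \notin G for t < T (episodes terminate on first visit). *)
Definition successful (P : S -> A1 -> A2 -> S -> R) (pi2 : S -> A2 -> R)
  (H : nat) (G : {set S}) (s0 : S) (tau : seq (S * A1)) : Prop :=
  match tau with
  | [::] => False
  | x :: r =>
    [/\ (size tau <= H)%N, x.1 = s0,
        path (fun p q : S * A1 => 0 < induced_P P pi2 p.1 p.2 q.1) x r,
        (last x r).1 \in G
      & all (fun p : S * A1 => p.1 \notin G) (belast x r)]
  end.
End Game.

Section Core.
Variable (Sig : eqType).

Definition common_subseq (W : seq Sig -> Prop) (u : seq Sig) : Prop :=
  forall w, W w -> subseq u w.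

Definition in_core (H : nat) (W : seq Sig -> Prop) (u : seq Sig) : Prop :=
  [/\ (size u <= H)%N, common_subseq W u &
      forall v, (size v <= H)%N -> common_subseq W v -> subseq u v -> v = u].
End Core.

Definition abstract_succ (R : realFieldType) (S A1 A2 : finType) (Sig : eqType)
  (P : S -> A1 -> A2 -> S -> R) (pi2 : S -> A2 -> R) (H : nat) (G : {set S})
  (s0 : S) (phi : S * A1 -> Sig) (w : seq Sig) : Prop :=
  exists tau, successful P pi2 H G s0 tau /\ w = map phi tau.

Definition abstract_succ_strip (R : realFieldType) (S A1 A2 : finType) (Sig : eqType)
  (P : S -> A1 -> A2 -> S -> R) (pi2 : S -> A2 -> R) (H : nat) (G : {set S})
  (s0 : S) (phi : S * A1 -> Sig) (g : Sig) (w : seq Sig) : Prop :=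
  exists tau, successful P pi2 H G s0 tau /\
              w = filter (fun c => c != g) (map phi tau).

From HB Require Import structures.
From mathcomp Require Import all_boot all_order all_algebra.
Import Order.TTheory GRing.Theory Num.Theory.
Local Open Scope ring_scope.

(** The peer decides, at the start state, which of two corridors the focal
agent is pushed into; both corridors lead to the goal in one more step.  Under
a pure peer policy the successful trajectory is unique, so the core of its
abstraction is that single word.  The two peer policies choose different
corridors, hence their cores are different singletons, and they stay disjoint
after the goal symbol is erased. *)

Section Deterministic.
Variables (R : realFieldType) (S A1 A2 : finType).

Definition det_kernel (next : S -> A1 -> A2 -> S) (s : S) (a1 : A1) (a2 : A2)
  (s' : S) : R := (s' == next s a1 a2)%:R.

Definition pure_policy (d : S -> A2) (s : S) (a2 : A2) : R := (a2 == d s)%:R.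

Lemma sum_indicator (T : finType) (x : T) : \sum_(y : T) ((y == x)%:R : R) = 1.
Proof.
rewrite (bigD1 x) //= eqxx big1 ?addr0 // => y /negbTE ->; exact: mulr0n.
Qed.

Lemma det_kernelP next : is_kernel (det_kernel next).
Proof. by split=> *; rewrite ?ler0n ?sum_indicator. Qed.

Lemma pure_policyP d : is_policy (pure_policy d).
Proof. by split=> *; rewrite ?ler0n ?sum_indicator. Qed.

Lemma induced_P_det next d s a1 s' :
  induced_P (det_kernel next) (pure_policy d) s a1 s' = (s' == next s a1 (d s))%:R.
Proof.
rewrite /induced_P (bigD1 (d s)) //= /pure_policy eqxx mulr1 big1 ?addr0 //.
by move=> a2 /negbTE ->; rewrite mulr0.
Qed.

Lemma induced_P_det_gt0 next d s a1 s' :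
  (0 < induced_P (det_kernel next) (pure_policy d) s a1 s') =
  (s' == next s a1 (d s)).
Proof. by rewrite induced_P_det ltr0n lt0b. Qed.

End Deterministic.

Arguments det_kernel {R S A1 A2} next s a1 a2 s'.
Arguments pure_policy {R S A2} d s a2.

Section SingletonFamily.
Variable (Sig : eqType).

Lemma in_core_singleton (H : nat) (W : seq Sig -> Prop) (w : seq Sig) :
  (forall v, W v <-> v = w) -> (size w <= H)%N ->
  forall u, in_core H W u <-> u = w.
Proof.
move=> Ww sizew u; rewrite /in_core; split=> [[_ common_u max_u] | ->].
  by symmetry; apply: max_u => //; [move=> v /Ww -> | apply/common_u/Ww].
split=> // [v /Ww -> // | v _ common_v sub_wv].
by apply: subseq_anti; rewrite sub_wv andbT; apply: common_v; apply/Ww.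
Qed.

End SingletonFamily.

Arguments in_core_singleton {Sig} H {W w}.

Section UniqueSuccess.
Variables (R : realFieldType) (S A1 A2 : finType) (Sig : eqType).
Variables (P : S -> A1 -> A2 -> S -> R) (pi2 : S -> A2 -> R) (H : nat).
Variables (G : {set S}) (s0 : S) (phi : S * A1 -> Sig) (tau : seq (S * A1)).
Hypothesis successful_tau : forall t, successful P pi2 H G s0 t <-> t = tau.

Lemma abstract_succ_unique w :
  abstract_succ P pi2 H G s0 phi w <-> w = map phi tau.
Proof.
split=> [[t [/successful_tau -> ->]] // | ->].
by exists tau; split=> //; apply/successful_tau.
Qed.

Lemma abstract_succ_strip_unique g w :
  abstract_succ_strip P pi2 H G s0 phi g w <->
  w = filter (fun c => c != g) (map phi tau).
Proof.
split=> [[t [/successful_tau -> ->]] // | ->].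
by exists tau; split=> //; apply/successful_tau.
Qed.

End UniqueSuccess.

Arguments abstract_succ_unique {R S A1 A2 Sig P pi2 H G s0} phi {tau}.
Arguments abstract_succ_strip_unique {R S A1 A2 Sig P pi2 H G s0} phi {tau}.

Section Corridors.
Variable (R : realFieldType).

Definition s_start : 'I_4 := @Ordinal 4 0 isT.
Definition s_goal : 'I_4 := @Ordinal 4 3 isT.
Definition corridor (b : bool) : 'I_4 :=
  if b then @Ordinal 4 1 isT else @Ordinal 4 2 isT.

Definition corridor_next (s : 'I_4) (_ : unit) (b : bool) : 'I_4 :=
  if s == s_start then corridor b else s_goal.

Definition corridor_kernel : 'I_4 -> unit -> bool -> 'I_4 -> R :=
  det_kernel corridor_next.

Definition choose_corridor (b : bool) : 'I_4 -> bool -> R :=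
  pure_policy (fun _ => b).

Definition goal : {set 'I_4} := [set s_goal].

Definition route (b : bool) : seq ('I_4 * unit) :=
  [:: (s_start, tt); (corridor b, tt); (s_goal, tt)].

Lemma successful_route b t :
  successful corridor_kernel (choose_corridor b) 3 goal s_start t <-> t = route b.
Proof.
rewrite /successful /corridor_kernel /choose_corridor.
split=> [|->]; last by rewrite /= !induced_P_det_gt0 /= !inE; case: b.
case: t => [//|[s1 []] r]; rewrite /=.
case: r => [|[s2 []] r] /=; first by case=> _ -> _; rewrite inE.
rewrite induced_P_det_gt0 /corridor_next.
case: r => [|[s3 []] r] /=.
  by case=> _ -> /andP[/eqP -> _]; rewrite inE; case: b.
rewrite induced_P_det_gt0 /corridor_next.
case: r => [|? ?] /=; last by case. (* longer than the horizon *)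
case=> _ -> /and3P[/eqP s2E /eqP s3E _] _ _.
by subst s3 s2; case: b.
Qed.

End Corridors.

Theorem proposition1 (R : realFieldType) :
  exists (S A1 A2 : finType) (P : S -> A1 -> A2 -> S -> R)
         (R1 : S -> A1 -> A2 -> R) (H : nat) (G : {set S}) (s0 : S)
         (Sig : finType) (phi : S * A1 -> Sig)
         (pi_e pi_e1 : S -> A2 -> R),
    [/\ is_kernel P /\ is_policy pi_e /\ is_policy pi_e1,
        ((exists tau, successful P pi_e H G s0 tau) /\
         (exists tau, successful P pi_e1 H G s0 tau)),
        (exists u : seq Sig,
           in_core H (abstract_succ P pi_e H G s0 phi) u /\
           ~ in_core H (abstract_succ P pi_e1 H G s0 phi) u)
      & exists g : Sig,
          (forall s a, (phi (s, a) == g) = (s \in G)) /\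
          (forall u : seq Sig,
             ~ (in_core H (abstract_succ_strip P pi_e H G s0 phi g) u /\
                in_core H (abstract_succ_strip P pi_e1 H G s0 phi g) u))].
Proof.
exists 'I_4, unit, bool, (corridor_kernel R), (fun _ _ _ => 0), 3%N, goal,
  s_start, 'I_4, fst, (choose_corridor R true), (choose_corridor R false).
have core b := in_core_singleton 3
  (abstract_succ_unique fst (successful_route R b)) isT.
have core_strip b := in_core_singleton 3
  (abstract_succ_strip_unique fst (successful_route R b) s_goal)
  (size_subseq (filter_subseq _ _)).
split.
- by split; [exact: det_kernelP | split; exact: pure_policyP].
- by split; eexists; apply/successful_route.
- exists (map fst (route true)).
  by split; [apply/core | move/core/(congr1 (map val))].
- exists s_goal; split=> [s a | u]; first by rewrite inE.
  by case=> /core_strip -> /core_strip/(congr1 (map val)).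
Qed.
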